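(* Let $N=N_n\to\infty$ and $m=m_n\to\infty$ be sequences of positive integers, and let $\delta_n,\varepsilon_n$ be positive sequences converging to $0$ with $\varepsilon_n=o(\delta_n)$. For every $n$ there is a coupling of $M'=M'_n\overset{d}{=}M(\lfloor N(1+\varepsilon_n)\rfloor,m)$ and $M=M_n\overset{d}{=}M(N,m)$ such that $M\le M'$ almost surely and $\mathbb P(M'-\delta_n\mathbb E\,M'\le M)\to1$. If, additionally, $\mathbb P(M'>\delta_n^{-1})\to0$, then $\mathbb P(M=M')\to1$.
   Context: $M(N,m)$ is the maximum number of balls in a bin after $N$ balls are thrown independently and uniformly at random into $m$ bins. *)

From mathcomp Require Import all_boot.
From Stdlib Require Import Reals ZArith.

Set Implicit Arguments.
Unset Strict Implicit.
Unset Printing Implicit Defensive.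

Definition maxload (N m : nat) (f : {ffun 'I_N -> 'I_m}) : nat :=
  (\max_(j < m) #|[set i | f i == j]|)%N.

Definition count_maxload (N m k : nat) : nat :=
  #|[set f : {ffun 'I_N -> 'I_m} | maxload f == k]|.

Local Open Scope R_scope.

(* Law of M(N,m): P(M(N,m) = k), balls thrown independently and uniformly,
   i.e. the assignment is uniform over the m^N functions 'I_N -> 'I_m. *)
Definition law_M (N m k : nat) : R :=
  INR (count_maxload N m k) / INR (expn m N).

(* floor(x) for x >= 0, as a natural number *)
Definition nfloor (x : R) : nat := Z.to_nat (Int_part x).

(* p : nat -> nat -> R is the joint pmf of a pair (M', M) of nat-valued random
   variables, supported in [0..K]x[0..K], with marginal laws mu (of M') and nu (of M). *)
Definition is_coupling (K : nat) (p : nat -> nat -> R) (mu nu : nat -> R) : Prop :=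
  (forall a b, 0 <= p a b) /\
  (forall a b, (K < a)%nat \/ (K < b)%nat -> p a b = 0) /\
  (forall a, (a <= K)%nat -> sum_f_R0 (fun b => p a b) K = mu a) /\
  (forall b, (b <= K)%nat -> sum_f_R0 (fun a => p a b) K = nu b).

Definition probJ (K : nat) (p : nat -> nat -> R) (E : nat -> nat -> bool) : R :=
  sum_f_R0 (fun a => sum_f_R0 (fun b => if E a b then p a b else 0) K) K.

Definition mean_M (N m : nat) : R :=
  sum_f_R0 (fun a => INR a * law_M N m a) N.

Definition tail_M (N m : nat) (t : R) : R :=
  sum_f_R0 (fun a => if Rlt_dec t (INR a) then law_M N m a else 0) N.

Definition Rle_b (x y : R) : bool := if Rle_dec x y then true else false.

Definition tends_to_infty (u : nat -> nat) : Prop :=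
  forall B : nat, exists n0 : nat, forall n, (n0 <= n)%nat -> (B <= u n)%nat.

From mathcomp Require Import all_boot.
From Stdlib Require Import Reals.
From Stdlib Require Import Lra Lia ZArith.
From mathcomp Require Import zify.

Set Implicit Arguments.
Unset Strict Implicit.
Unset Printing Implicit Defensive.
Local Open Scope R_scope.

(* The coupling throws K = N' >= N balls uniformly into m bins and lets
   M' be the maximum load of all K balls and M the maximum load of the first
   N of them.  Restricting a uniform map 'I_K -> 'I_m to the first N balls
   gives a uniform map 'I_N -> 'I_m, so M has the law of M(N,m), and M <= M'.
   The heart of the argument is a deletion inequality: for every truncation
   level T, the ratio E[min(M(n,m),T)] / n is nonincreasing in n, because
   deleting a random ball from a fullest bin can only lower its load by one.
   Comparing n = N and n = K gives
     E[min(M',T)] - E[min(M,T)] <= eps * E[min(M',T)].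
   With T = K, Markov's inequality bounds P(M < M' - delta E M') by eps/delta;
   with T = floor(1/delta), P(M <> M') <= P(M' > 1/delta) + eps/delta. *)

Section Counting.
Local Open Scope nat_scope.

Lemma card_setE (T : finType) (P : pred T) : #|[set x | P x]| = \sum_x (P x : nat).
Proof. by rewrite -sum1dep_card big_mkcond; apply: eq_bigr => x _; case: (P x). Qed.

(* Restriction along an injection s : A -> B pushes the uniform law on maps
   B -> C forward to the uniform law on maps A -> C: every fiber has the
   same size |C|^(|B|-|A|). *)
Section Restriction.
Variables (A B C : finType) (s : A -> B).
Hypothesis s_inj : injective s.

Definition resF (f : {ffun B -> C}) : {ffun A -> C} := [ffun a => f (s a)].

Lemma card_resF_fiber (g : {ffun A -> C}) :
  #|[set f : {ffun B -> C} | resF f == g]| = expn #|C| (#|B| - #|A|).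
Proof.
pose F b := if [pick a | s a == b] is Some a then pred1 (g a) else predT.
have -> : [set f : {ffun B -> C} | resF f == g] = [set f in finfun.family F].
  apply/setP => f; rewrite !inE; apply/eqP/familyP => [resf b | Ff].
    by rewrite /F; case: pickP => [a /eqP <-|_] //=; rewrite inE -resf ffunE.
  apply/ffunP => a; rewrite ffunE; have := Ff (s a); rewrite /F.
  by case: pickP => [a' /eqP /s_inj -> /eqP //|/(_ a)]; rewrite eqxx.
have card_F b : #|F b| = if b \in codom s then 1 else #|C|.
  rewrite /F; case: pickP => [a /eqP <-|no_pre]; first by rewrite codom_f card1.
  suff /negbTE -> : b \notin codom s by apply: eq_card.
  by apply/codomP => -[a def_b]; have := no_pre a; rewrite def_b eqxx.
rewrite cardsE card_family foldrE big_map big_enum /= (eq_bigr _ (fun b _ => card_F b)).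
rewrite (bigID (mem (codom s))) /= big1 => [|b -> //]; rewrite mul1n.
rewrite (eq_bigr (fun _ => #|C|)) => [|b /negbTE -> //]; rewrite prod_nat_const.
by rewrite -(cardC (mem (codom s))) card_codom // addKn; congr expn; exact: eq_card.
Qed.

Lemma sum_resF (h : {ffun A -> C} -> nat) :
  \sum_(f : {ffun B -> C}) h (resF f) = expn #|C| (#|B| - #|A|) * \sum_g h g.
Proof.
rewrite (partition_big resF xpredT) //= big_distrr /=; apply: eq_bigr => g _.
rewrite (eq_bigr (fun _ => h g)) => [|f /eqP -> //].
by rewrite sum_nat_cond_const card_resF_fiber mulnC.
Qed.
End Restriction.

Definition load N m (f : {ffun 'I_N -> 'I_m}) (j : 'I_m) : nat := #|[set i | f i == j]|.

Lemma load_le_maxload N m (f : {ffun 'I_N -> 'I_m}) j : load f j <= maxload f.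
Proof. exact: leq_bigmax. Qed.

Lemma maxload_le N m (f : {ffun 'I_N -> 'I_m}) : maxload f <= N.
Proof. by apply/bigmax_leqP => j _; rewrite -[X in _ <= X]card_ord max_card. Qed.

Lemma fullest_bin N m (f : {ffun 'I_N -> 'I_m}) : 0 < m -> exists j, maxload f = load f j.
Proof.
move=> m_gt0; have card_gt0 : 0 < #|'I_m| by rewrite card_ord.
by have [j max_j] := eq_bigmax (load f) card_gt0; exists j.
Qed.

Lemma maxload_resF N K m (s : 'I_N -> 'I_K) (f : {ffun 'I_K -> 'I_m}) :
  injective s -> maxload (resF s f) <= maxload f.
Proof.
move=> s_inj; apply/bigmax_leqP => j _; apply: leq_trans (load_le_maxload f j).
rewrite -(card_imset _ s_inj); apply: subset_leq_card.
by apply/subsetP => b /imsetP [a]; rewrite !inE ffunE => fsa ->.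
Qed.

Lemma load_delete n m (f : {ffun 'I_n.+1 -> 'I_m}) i j :
  load (resF (lift i) f) j + (f i == j) = load f j.
Proof.
rewrite /load !card_setE (bigD1_ord i (P := xpredT)) //= addnC; congr (_ + _).
by apply: eq_bigr => k _; rewrite ffunE.
Qed.

(* m^n * E[min(M(n,m), T)]. *)
Definition trunc_total m T n : nat := \sum_(g : {ffun 'I_n -> 'I_m}) minn (maxload g) T.

Lemma deletion_pointwise n m T (f : {ffun 'I_n.+1 -> 'I_m}) : 0 < m ->
  n * minn (maxload f) T <= \sum_(i < n.+1) minn (maxload (resF (lift i) f)) T.
Proof.
move=> m_gt0; have [j fullest] := fullest_bin f m_gt0.
have delete_lb i : maxload f <= maxload (resF (lift i) f) + (f i == j).
  by rewrite fullest -(load_delete f i) leq_add2r load_le_maxload.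
have [LleT | TltL] := leqP (maxload f) T.
  have sum_ind : \sum_(i < n.+1) (f i == j : nat) = maxload f.
    by rewrite fullest /load card_setE.
  have : \sum_(i < n.+1) maxload f <=
         \sum_(i < n.+1) (minn (maxload (resF (lift i) f)) T + (f i == j)).
    by apply: leq_sum => i _; move: (delete_lb i); case: (f i == j) => /=; lia.
  by rewrite big_split sum_nat_const card_ord sum_ind mulSnr leq_add2r.
apply: leq_trans (_ : \sum_(i < n.+1) T <= _).
  by rewrite sum_nat_const card_ord leq_mul2r leqnSn orbT.
apply: leq_sum => i _; move: (delete_lb i); case: (f i == j) => /=; lia.
Qed.

Lemma deletion_step n m T : 0 < m -> n * trunc_total m T n.+1 <= n.+1 * m * trunc_total m T n.
Proof.
move=> m_gt0; rewrite /trunc_total big_distrr /=.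
apply: (@leq_trans (\sum_(f : {ffun 'I_n.+1 -> 'I_m})
                     \sum_(i < n.+1) minn (maxload (resF (lift i) f)) T)).
  by apply: leq_sum => f _; apply: deletion_pointwise.
rewrite exchange_big /= (eq_bigr (fun i => m * trunc_total m T n)).
  by rewrite sum_nat_const card_ord mulnA.
move=> i _; rewrite (sum_resF (@lift_inj _ i) (fun g => minn (maxload g) T)).
by rewrite !card_ord subSnn expn1.
Qed.

Lemma deletion_iter N d m T : 0 < m -> 0 < N ->
  N * trunc_total m T (N + d) <= (N + d) * expn m d * trunc_total m T N.
Proof.
move=> m_gt0 N_gt0; elim: d => [|d IH]; first by rewrite addn0 expn0 muln1.
have step := deletion_step (N + d) T m_gt0; rewrite -addnS in step.
rewrite -(leq_pmul2l (_ : 0 < N + d)); last by rewrite addn_gt0 N_gt0.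
set S0 := trunc_total m T N in IH *; set Sd := trunc_total m T (N + d) in IH step *.
apply: leq_trans (_ : N * ((N + d.+1) * m * Sd) <= _).
  by rewrite mulnCA leq_mul2l step orbT.
have -> : N * ((N + d.+1) * m * Sd) = (N + d.+1) * m * (N * Sd) by rewrite mulnCA.
apply: leq_trans (_ : (N + d.+1) * m * ((N + d) * expn m d * S0) <= _).
  by rewrite leq_mul2l IH orbT.
by rewrite expnS; apply: eq_leq; lia.
Qed.

Lemma sum_pick (F : nat -> nat) y n : y < n ->
  \sum_(b < n) (if y == b then F b else 0) = F y.
Proof.
move=> y_lt; rewrite (bigD1 (Ordinal y_lt)) //= eqxx big1 ?addn0 // => b b_neq.
by case: eqP => // y_eq; move: b_neq; rewrite -val_eqE /= y_eq eqxx.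
Qed.

Section Coupling.
Variables (N K m : nat) (NleK : N <= K).

Lemma widen_inj : injective (widen_ord NleK).
Proof. by move=> a b /(congr1 val) /= /val_inj. Qed.

Definition Mall (f : {ffun 'I_K -> 'I_m}) : nat := maxload f.
Definition Mfirst (f : {ffun 'I_K -> 'I_m}) : nat := maxload (resF (widen_ord NleK) f).

(* Number of maps with (Mall, Mfirst) = (a, b), i.e. m^K times the joint pmf. *)
Definition joint_count a b : nat :=
  #|[set f : {ffun 'I_K -> 'I_m} | (Mall f == a) && (Mfirst f == b)]|.

Lemma Mall_le f : Mall f <= K. Proof. exact: maxload_le. Qed.
Lemma Mfirst_le f : Mfirst f <= K. Proof. exact: leq_trans (maxload_le _) NleK. Qed.
Lemma Mfirst_le_Mall f : Mfirst f <= Mall f. Proof. exact/maxload_resF/widen_inj. Qed.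

Lemma minn_Mfirst_le T f : minn (Mfirst f) T <= minn (Mall f) T.
Proof. by rewrite leq_min geq_minr andbT (leq_trans (geq_minl _ _) (Mfirst_le_Mall f)). Qed.

Lemma sum_joint_count (E : nat -> nat -> bool) :
  \sum_(a < K.+1) \sum_(b < K.+1) (if E a b then joint_count a b else 0) =
  #|[set f | E (Mall f) (Mfirst f)]|.
Proof.
pose ind f a b := if Mall f == a then if Mfirst f == b then (E a b : nat) else 0 else 0.
transitivity (\sum_(a < K.+1) \sum_(b < K.+1) \sum_f ind f a b).
  apply: eq_bigr => a _; apply: eq_bigr => b _; rewrite /joint_count card_setE /ind.
  by case: (E a b); [apply: eq_bigr => f _ | rewrite big1 // => f _];
    case: (Mall f == a); case: (Mfirst f == b).
rewrite (eq_bigr _ (fun a _ => exchange_big _ _ _ _ _ _)) exchange_big card_setE.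
apply: eq_bigr => f _; rewrite /ind.
rewrite (eq_bigr (fun a : 'I_K.+1 => if Mall f == a then (E a (Mfirst f) : nat) else 0)).
  by rewrite (sum_pick (fun a => (E a (Mfirst f) : nat))) // ltnS Mall_le.
move=> a _; case: (Mall f == a); last by rewrite big1.
by rewrite (sum_pick (fun b => (E a b : nat))) // ltnS Mfirst_le.
Qed.

Lemma sum_count_maxload (w : nat -> nat) :
  \sum_(a < K.+1) w a * count_maxload K m a = \sum_f w (Mall f).
Proof.
rewrite (eq_bigr (fun a : 'I_K.+1 => \sum_f (if Mall f == a then w a else 0))).
  by rewrite exchange_big; apply: eq_bigr => f _; rewrite (sum_pick w) // ltnS Mall_le.
move=> a _; rewrite /count_maxload card_setE big_distrr /=.
by apply: eq_bigr => f _; rewrite /Mall; case: (maxload f == a); rewrite ?muln1 ?muln0.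
Qed.

Lemma joint_count_marginal_all a : a <= K ->
  \sum_(b < K.+1) joint_count a b = count_maxload K m a.
Proof.
move=> a_le; have := sum_joint_count (fun a' _ => a' == a).
rewrite (eq_bigr (fun a' : 'I_K.+1 => if a == a' then \sum_(b < K.+1) joint_count a' b else 0)).
  by rewrite (sum_pick (fun a' => \sum_(b < K.+1) joint_count a' b)).
by move=> a' _; rewrite eq_sym; case: (_ == _) => //; rewrite big1.
Qed.

Lemma joint_count_marginal_first b : b <= K ->
  \sum_(a < K.+1) joint_count a b = expn m (K - N) * count_maxload N m b.
Proof.
move=> b_le; have := sum_joint_count (fun _ b' => b' == b); rewrite exchange_big.
rewrite (eq_bigr (fun b' : 'I_K.+1 => if b == b' then \sum_(a < K.+1) joint_count a b' else 0)).
  rewrite (sum_pick (fun b' => \sum_(a < K.+1) joint_count a b')) // => ->.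
  rewrite card_setE /count_maxload card_setE.
  have := sum_resF widen_inj (fun g : {ffun 'I_N -> 'I_m} => (maxload g == b : nat)).
  by rewrite !card_ord.
by move=> b' _; rewrite eq_sym; case: (_ == _) => //; rewrite big1.
Qed.

Lemma joint_count_support a b : K < a \/ K < b \/ a < b -> joint_count a b = 0.
Proof.
move=> out; apply/eqP; rewrite cards_eq0; apply/eqP/setP => f; rewrite !inE.
apply/negbTE/negP => /andP [/eqP fa /eqP fb].
by have := Mall_le f; have := Mfirst_le f; have := Mfirst_le_Mall f; rewrite fa fb; lia.
Qed.

Lemma trunc_total_compare T : 0 < m -> 0 < N ->
  N * \sum_f minn (Mall f) T <= K * \sum_f minn (Mfirst f) T.
Proof.
move=> m_gt0 N_gt0.
have -> : \sum_f minn (Mfirst f) T = expn m (K - N) * trunc_total m T N.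
  have := sum_resF widen_inj (fun g : {ffun 'I_N -> 'I_m} => minn (maxload g) T).
  by rewrite !card_ord.
by rewrite mulnA; have := deletion_iter (K - N) T m_gt0 N_gt0; rewrite subnKC.
Qed.

Lemma card_large_gap q :
  #|[set f | q < Mall f - Mfirst f]| * q.+1 <= \sum_f Mall f - \sum_f Mfirst f.
Proof.
rewrite -sumnB => [|f _]; last exact: Mfirst_le_Mall.
rewrite -sum_nat_cond_const [X in _ <= X](bigID (fun f => q < Mall f - Mfirst f)) /=.
by apply: leq_trans (leq_addr _ _); apply: leq_sum.
Qed.

Lemma card_neq_le T :
  #|[set f | Mall f != Mfirst f]| <=
  #|[set f | T < Mall f]| + (\sum_f minn (Mall f) T - \sum_f minn (Mfirst f) T).
Proof.
rewrite !card_setE -sumnB => [|f _]; last exact: minn_Mfirst_le.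
rewrite -big_split /=; apply: leq_sum => f _; have := Mfirst_le_Mall f.
by case: (ltnP T (Mall f)); case: eqP => /=; lia.
Qed.

Lemma card_setC_ffun (P : pred {ffun 'I_K -> 'I_m}) :
  #|[set f | P f]| + #|[set f | ~~ P f]| = expn m K.
Proof.
have := cardsC [set f | P f]; rewrite card_ffun !card_ord => <-; congr (_ + _).
by apply: eq_card => f; rewrite !inE.
Qed.

End Coupling.
End Counting.

Lemma sum_f_R0_INR (G : nat -> nat) (D : R) K :
  sum_f_R0 (fun i => INR (G i) / D) K = INR (\sum_(i < K.+1) G i) / D.
Proof.
elim: K => [|K IH]; first by rewrite /= big_ord_recr big_ord0.
by rewrite /= IH [in RHS]big_ord_recr /= plus_INR /Rdiv Rmult_plus_distr_r.
Qed.

Lemma Nat_eqbE a b : Nat.eqb a b = (a == b).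
Proof. exact/PeanoNat.Nat.eqb_spec/eqP. Qed.

Lemma nfloor_spec x : 0 <= x -> INR (nfloor x) <= x < INR (nfloor x) + 1.
Proof.
move=> x_ge0; rewrite /nfloor; have [lb ub] := base_Int_part x.
have Int_part_ge0 : (0 <= Int_part x)%Z.
  suff : (-1 < Int_part x)%Z by lia.
  by apply: lt_IZR; rewrite /=; lra.
rewrite INR_IZR_INZ Z2Nat.id //; lra.
Qed.

Lemma nfloor_lt x a : 0 <= x -> (nfloor x < a)%nat <-> x < INR a.
Proof.
move=> x_ge0; have [lb ub] := nfloor_spec x_ge0; split => [lt_a | lt_x].
  have : INR (nfloor x).+1 <= INR a by apply/le_INR/leP.
  by rewrite S_INR; lra.
by apply/ltP/INR_lt; lra.
Qed.

Lemma le_nfloor_scale n e : 0 <= e -> (n <= nfloor (INR n * (1 + e)))%nat.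
Proof.
move=> e_ge0; have n_ge0 := pos_INR n.
have [_ ub] : INR (nfloor (INR n * (1 + e))) <= INR n * (1 + e)
              < INR (nfloor (INR n * (1 + e))) + 1.
  by apply: nfloor_spec; apply: Rmult_le_pos; lra.
suff : INR n < INR (nfloor (INR n * (1 + e))).+1 by move/INR_lt/ltP.
rewrite S_INR; nra.
Qed.

Lemma Un_cv_1_squeeze (u b : nat -> R) :
  (forall n, 0 <= 1 - u n <= b n) -> Un_cv b 0 -> Un_cv u 1.
Proof.
move=> bounds b_cv e e_pos; have [n0 near] := b_cv e e_pos; exists n0 => n n_ge.
have := near n n_ge; have [lb ub] := bounds n; rewrite /R_dist Rminus_0_r.
by rewrite Rabs_right ?Rabs_left1; lra.
Qed.

Lemma relative_gap (n k a b e : R) :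
  0 < n -> n <= k -> k <= n * (1 + e) -> 0 <= e -> 0 <= b <= a ->
  n * a <= k * b -> a - b <= e * a.
Proof. by move=> *; nra. Qed.

Lemma ratio_le (a D e d : R) : 0 < D -> 0 < d -> a * d <= e * D -> a / D <= e / d.
Proof.
by move=> D_pos d_pos ad_le; apply: (Rmult_le_reg_r (D * d)); [nra | field_simplify; lra].
Qed.

Definition coupling_pmf N K m (NleK : (N <= K)%nat) (a b : nat) : R :=
  INR (joint_count m NleK a b) / INR (expn m K).

(* Probabilities of events of the coupling: D = m^K configurations are
   equally likely, so each probability is a count divided by D. *)
Section Probabilities.
Variables (N K m : nat) (NleK : (N <= K)%nat).
Hypotheses (m_gt0 : (0 < m)%nat) (N_gt0 : (0 < N)%nat).
Let D := INR (expn m K).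
Local Notation config := {ffun 'I_K -> 'I_m}.

Lemma D_pos : 0 < D.
Proof. by apply/lt_0_INR/ltP; rewrite expn_gt0 m_gt0. Qed.

Lemma count_ratio_ge0 n : 0 <= INR n / D.
Proof. exact: Rmult_le_pos (pos_INR n) (Rlt_le _ _ (Rinv_0_lt_compat _ D_pos)). Qed.

Lemma probJ_count (E : nat -> nat -> bool) :
  probJ K (coupling_pmf m NleK) E = INR #|[set f : config | E (Mall f) (Mfirst NleK f)]| / D.
Proof.
pose G a b := if E a b then joint_count m NleK a b else 0%nat.
rewrite /probJ -(sum_joint_count m NleK E).
rewrite -(sum_f_R0_INR (fun a => \sum_(b < K.+1) G a b)); apply: sum_eq => a _.
rewrite -(sum_f_R0_INR (G a)); apply: sum_eq => b _.
by rewrite /coupling_pmf /G; case: (E a b); rewrite //= /Rdiv Rmult_0_l.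
Qed.

Lemma probJ_compl (E : nat -> nat -> bool) :
  1 - probJ K (coupling_pmf m NleK) E =
  INR #|[set f : config | ~~ E (Mall f) (Mfirst NleK f)]| / D.
Proof.
rewrite probJ_count; have D_gt0 := D_pos.
have : INR #|[set f : config | E (Mall f) (Mfirst NleK f)]|
       + INR #|[set f : config | ~~ E (Mall f) (Mfirst NleK f)]| = D.
  by rewrite -plus_INR; apply: f_equal; exact: card_setC_ffun.
by move=> sum_D; field_simplify_eq; lra.
Qed.

Lemma mean_M_sum : mean_M K m = INR (\sum_(f : config) Mall f) / D.
Proof.
rewrite /mean_M -(sum_count_maxload K m (fun a => a)).
rewrite -(sum_f_R0_INR (fun a => a * count_maxload K m a)%nat); apply: sum_eq => a _.
by rewrite /law_M mult_INR /Rdiv Rmult_assoc.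
Qed.

Lemma tail_M_count x : 0 <= x ->
  tail_M K m x = INR #|[set f : config | (nfloor x < Mall f)%nat]| / D.
Proof.
move=> x_ge0; rewrite card_setE /tail_M.
rewrite -(sum_count_maxload K m (fun a => (nfloor x < a)%nat)).
rewrite -(sum_f_R0_INR (fun a => (nfloor x < a)%nat * count_maxload K m a)%nat).
apply: sum_eq => a _; rewrite /law_M; case: Rlt_dec => [lt_x | nlt_x].
  by rewrite (introT idP (proj2 (nfloor_lt a x_ge0) lt_x)) mul1n.
have -> : (nfloor x < a)%nat = false by apply/negbTE/negP => /(nfloor_lt a x_ge0).
by rewrite mul0n /= /Rdiv Rmult_0_l.
Qed.

Lemma coupling_pmf_is_coupling : is_coupling K (coupling_pmf m NleK) (law_M K m) (law_M N m).
Proof.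
split; [|split; [|split]].
- by move=> a b; apply: count_ratio_ge0.
- move=> a b out; rewrite /coupling_pmf joint_count_support ?Rdiv_0_l //.
  by case: out; [left | right; left].
- by move=> a a_le; rewrite sum_f_R0_INR joint_count_marginal_all.
- move=> b b_le; rewrite (sum_eq _ (fun a => INR (joint_count m NleK a b) / D)) //.
  rewrite sum_f_R0_INR joint_count_marginal_first // /law_M mult_INR /D.
  rewrite -(subnK NleK) expnD mult_INR addnK.
  have : 0 < INR (expn m (K - N)) by apply/lt_0_INR/ltP; rewrite expn_gt0 m_gt0.
  have : 0 < INR (expn m N) by apply/lt_0_INR/ltP; rewrite expn_gt0 m_gt0.
  by move=> *; field; lra.
Qed.

Variables (eps delta : R).
Hypotheses (eps_pos : 0 < eps) (delta_pos : 0 < delta).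
Hypothesis K_le : INR K <= INR N * (1 + eps).

Lemma trunc_gap T :
  INR (\sum_(f : config) minn (Mall f) T) - INR (\sum_(f : config) minn (Mfirst NleK f) T)
  <= eps * INR (\sum_(f : config) minn (Mall f) T).
Proof.
apply: (@relative_gap (INR N) (INR K)); try lra.
- by apply/lt_0_INR/ltP.
- by apply/le_INR/leP.
- split; first exact: pos_INR.
  by apply/le_INR/leP/leq_sum => f _; apply: minn_Mfirst_le.
- by rewrite -!mult_INR; apply/le_INR/leP/trunc_total_compare.
Qed.

Lemma mean_gap :
  INR (\sum_(f : config) Mall f) - INR (\sum_(f : config) Mfirst NleK f)
  <= eps * INR (\sum_(f : config) Mall f).
Proof.
have := trunc_gap K.
rewrite (eq_bigr _ (fun f _ => minn_idPl (Mall_le f))).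
by rewrite (eq_bigr _ (fun f _ => minn_idPl (Mfirst_le NleK f))).
Qed.

(* Markov: P(M < M' - delta E M') <= E[M' - M] / (delta E M') <= eps / delta. *)
Lemma far_prob_bound :
  0 <= 1 - probJ K (coupling_pmf m NleK)
             (fun a b => Rle_b (INR a - delta * mean_M K m) (INR b)) <= eps / delta.
Proof.
have D_gt0 := D_pos; rewrite probJ_compl mean_M_sum.
set X := INR (\sum_(f : config) Mall f); set s := delta * (X / D).
have s_ge0 : 0 <= s by apply: Rmult_le_pos; [lra | exact: count_ratio_ge0].
have [_ s_lt] := nfloor_spec s_ge0; set q := nfloor s in s_lt.
have -> : [set f : config | ~~ Rle_b (INR (Mall f) - s) (INR (Mfirst NleK f))] =
          [set f : config | (q < Mall f - Mfirst NleK f)%nat].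
  apply/setP => f; rewrite !inE /Rle_b.
  have gap_INR : INR (Mall f - Mfirst NleK f) = INR (Mall f) - INR (Mfirst NleK f).
    by rewrite minus_INR //; exact/leP/Mfirst_le_Mall.
  case: Rle_dec => [le | nle] /=; apply/esym.
    by apply/negP => /(nfloor_lt _ s_ge0); rewrite gap_INR; lra.
  by apply/(nfloor_lt _ s_ge0); rewrite gap_INR; lra.
have far_le : INR #|[set f : config | (q < Mall f - Mfirst NleK f)%nat]| * (INR q + 1)
              <= X - INR (\sum_(f : config) Mfirst NleK f).
  rewrite -S_INR -mult_INR -minus_INR; last by apply/leP/leq_sum => f _; apply: Mfirst_le_Mall.
  exact/le_INR/leP/card_large_gap.
have := mean_gap; rewrite -/X => gap.
set a := INR #|_| in far_le *; have a_ge0 : 0 <= a by exact: pos_INR.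
split; first exact: count_ratio_ge0.
(* a (q + 1) <= eps X and delta X < (q + 1) D give a delta <= eps D. *)
apply: ratio_le => //.
have sD : delta * X < (INR q + 1) * D.
  have -> : delta * X = s * D by rewrite /s; field; lra.
  exact: Rmult_lt_compat_r.
by apply: (Rmult_le_reg_l (INR q + 1)); [exact: Rle_lt_0_plus_1 (pos_INR q) | nra].
Qed.

(* P(M <> M') <= P(M' > 1/delta) + E[min(M',T) - min(M,T)] with T = floor(1/delta),
   and the second term is at most eps T <= eps / delta. *)
Lemma neq_prob_bound :
  0 <= 1 - probJ K (coupling_pmf m NleK) (fun a b => Nat.eqb a b)
    <= tail_M K m (/ delta) + eps / delta.
Proof.
have D_gt0 := D_pos; have inv_ge0 : 0 <= / delta by apply/Rlt_le/Rinv_0_lt_compat.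
rewrite probJ_compl tail_M_count //; have [T_le _] := nfloor_spec inv_ge0.
set T := nfloor (/ delta) in T_le *.
set A := (\sum_(f : config) minn (Mall f) T)%nat.
set B := (\sum_(f : config) minn (Mfirst NleK f) T)%nat.
have neq_le : INR #|[set f : config | ~~ Nat.eqb (Mall f) (Mfirst NleK f)]|
              <= INR #|[set f : config | (T < Mall f)%nat]| + (INR A - INR B).
  rewrite -minus_INR -?plus_INR; last by apply/leP/leq_sum => f _; apply: minn_Mfirst_le.
  apply/le_INR/leP; under eq_finset => f do rewrite Nat_eqbE.
  exact: card_neq_le.
have A_le : INR A <= D * INR T.
  rewrite /D -mult_INR; apply/le_INR/leP; apply: leq_trans (_ : \sum_(f : config) T <= _)%nat.
    by apply: leq_sum => f _; apply: geq_minr.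
  by rewrite sum_nat_const card_ffun !card_ord.
have := trunc_gap T; rewrite -/A -/B => gap.
have A_ge0 : 0 <= INR A by exact: pos_INR.
split; first exact: count_ratio_ge0.
set c := INR #|_| in neq_le *; set t := INR #|_| in neq_le *.
suff : (c - t) / D <= eps / delta by rewrite /Rdiv; lra.
have T_delta : INR T * delta <= 1.
  by rewrite -(Rinv_l delta); [apply: Rmult_le_compat_r; lra | lra].
have excess : c - t <= eps * D * INR T.
  have : eps * INR A <= eps * (D * INR T) by apply: Rmult_le_compat_l; lra.
  lra.
apply: ratio_le => //; have : 0 <= eps * D by nra.
nra.
Qed.

End Probabilities.

Theorem mainTheorem18
  (N m : nat -> nat) (delta eps : nat -> R)
  (HNpos : forall n, (0 < N n)%nat) (Hmpos : forall n, (0 < m n)%nat)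
  (HNinf : tends_to_infty N) (Hminf : tends_to_infty m)
  (Hdpos : forall n, 0 < delta n) (Hepos : forall n, 0 < eps n)
  (Hd0 : Un_cv delta 0) (He0 : Un_cv eps 0)
  (Hed : Un_cv (fun n => eps n / delta n) 0) :
  let N' := fun n => nfloor (INR (N n) * (1 + eps n)) in
  exists p : nat -> nat -> nat -> R,
    (forall n, is_coupling (N' n) (p n) (law_M (N' n) (m n)) (law_M (N n) (m n))) /\
    (forall n a b, (a < b)%nat -> p n a b = 0) /\
    Un_cv (fun n => probJ (N' n) (p n)
             (fun a b => Rle_b (INR a - delta n * mean_M (N' n) (m n)) (INR b))) 1 /\
    (Un_cv (fun n => tail_M (N' n) (m n) (/ delta n)) 0 ->
     Un_cv (fun n => probJ (N' n) (p n) (fun a b => Nat.eqb a b)) 1).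
Proof.
move=> N'.
have NleN' n : (N n <= N' n)%nat by apply: le_nfloor_scale; apply/Rlt_le.
have N'_le n : INR (N' n) <= INR (N n) * (1 + eps n).
  by apply: (proj1 (nfloor_spec _)); have := Hepos n; have := pos_INR (N n); nra.
exists (fun n => coupling_pmf (m n) (NleN' n)); split; [|split; [|split]].
- by move=> n; apply: coupling_pmf_is_coupling (Hmpos n).
- move=> n a b ab.
  by rewrite /coupling_pmf joint_count_support /= ?Rdiv_0_l //; right; right.
- apply: (Un_cv_1_squeeze _ Hed) => n /=.
  exact (far_prob_bound (NleN' n) (Hmpos n) (HNpos n) (Hepos n) (Hdpos n) (N'_le n)).
- move=> tail_cv.
  pose bound n := tail_M (N' n) (m n) (/ delta n) + eps n / delta n.
  apply: (Un_cv_1_squeeze (b := bound)) => [n|].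
    exact (neq_prob_bound (NleN' n) (Hmpos n) (HNpos n) (Hepos n) (Hdpos n) (N'_le n)).
  by have := CV_plus _ _ _ _ tail_cv Hed; rewrite Rplus_0_l.
Qed.
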